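(* For every prime $d$, every $n\ge 1$ and every $n$-qudit state $\rho$, the mean state $\mathcal M(\rho)$ is a minimal stabilizer-projection state (MSPS). More precisely, the set $S=\{\vec x\in V^n:|\Xi_\rho(\vec x)|=1\}$ is a subgroup of $V^n$ of size $d^r$ for some $0\le r\le n$ whose Weyl operators pairwise commute, and $\mathcal M(\rho)=P/d^{n-r}$ where $P$ is a minimal projection in the C*-algebra generated by $\{w(\vec x):\vec x\in S\}$.
   Context: Fix a prime $d$ and $n\ge1$. Let $\mathcal H=\mathbb C^d$ with computational basis $\{|k\rangle\}_{k\in\mathbb Z_d}$, $\chi(k)=e^{2\pi i k/d}$, $X|k\rangle=|k+1\rangle$, $Z|k\rangle=\chi(k)|k\rangle$. For $(p,q)\in\mathbb Z_d^2$ the Weyl operator is $w(p,q)=\chi(-2^{-1}pq)Z^pX^q$ if $d$ is odd ($2^{-1}$ the inverse of $2$ mod $d$) and $w(p,q)=i^{-pq}Z^pX^q$ if $d=2$. Let $V^n=\mathbb Z_d^n\times\mathbb Z_d^n$; for $(\vec p,\vec q)\in V^n$ set $w(\vec p,\vec q)=\bigotimes_{k=1}^n w(p_k,q_k)$ on $\mathcal H^{\otimes n}$. A state is a positive semidefinite trace-one operator. The characteristic function of $\rho$ is $\Xi_\rho(\vec p,\vec q)=\mathrm{Tr}[\rho\,w(-\vec p,-\vec q)]$, so that $\rho=d^{-n}\sum_{(\vec p,\vec q)\in V^n}\Xi_\rho(\vec p,\vec q)w(\vec p,\vec q)$. For an abelian group $S$ of Weyl operators (considered up to phases), a minimal projection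 of the C*-algebra $C^*(S)$ generated by $S$ is a minimal stabilizer projection associated with $S$, and a minimal stabilizer-projection state (MSPS) is such a projection divided by its rank. The mean state $\mathcal M(\rho)$ is the operator with characteristic function $\Xi_{\mathcal M(\rho)}(\vec x)=\Xi_\rho(\vec x)$ if $|\Xi_\rho(\vec x)|=1$ and $\Xi_{\mathcal M(\rho)}(\vec x)=0$ otherwise. *)

(* Complex scalars: an arbitrary numClosedFieldType C
   (e.g. the complex numbers complex R for R : realType). *)
From HB Require Import structures.
From mathcomp Require Import all_boot all_order all_algebra.

Set Implicit Arguments. Unset Strict Implicit. Unset Printing Implicit Defensive.
Import Order.TTheory GRing.Theory Num.Theory.
Local Open Scope ring_scope.

Section Weyl.
Variables (C : numClosedFieldType) (d n : nat).

(* Operators on a finite-dimensional space whose basis is indexed by a finType I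
   are square matrices of size #|I|; [mxI f] is the operator with entries
   <j| A |k> = f j k. *)
Definition mxI (I : finType) (f : I -> I -> C) : 'M[C]_#|I| :=
  \matrix_(a, b) f (enum_val a) (enum_val b).

Definition mxpow (m : nat) (A : 'M[C]_m) (k : nat) : 'M[C]_m :=
  iter k (mulmx A) 1%:M.

Definition adj (m k : nat) (A : 'M[C]_(m, k)) : 'M[C]_(k, m) := (map_mx Num.conj A)^T.

(* omega = e^{2 pi i/d}: d.-root(-1) is the d-th root of -1 of minimal
   nonnegative argument, i.e. e^{i pi/d}; its square is e^{2 pi i/d}. *)
Definition omega : C := (d.-root (-1)) ^+ 2.
Definition chi (k : 'Z_d) : C := omega ^+ (val k).

Definition Xop : 'M[C]_#|'Z_d| := mxI (fun j k : 'Z_d => ((j == k + 1) : nat)%:R).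
Definition Zop : 'M[C]_#|'Z_d| := mxI (fun j k : 'Z_d => ((j == k) : nat)%:R * chi k).

Definition wphase (p q : 'Z_d) : C :=
  if d == 2%N then ('i ^+ (val (p * q)))^-1
  else chi (- ((2%:R : 'Z_d)^-1 * p * q)).

Definition w1 (p q : 'Z_d) : 'M[C]_#|'Z_d| :=
  wphase p q *: (mxpow Zop (val p) *m mxpow Xop (val q)).

(* n-qudit computational basis, phase space V^n = Z_d^n x Z_d^n *)
Definition cfg := {ffun 'I_n -> 'Z_d}.
Definition Vn := (cfg * cfg)%type.
Definition op := 'M[C]_#|{ffun 'I_n -> 'Z_d}|.

(* n-qudit Weyl operator: tensor (Kronecker) product of the w1 (p_k, q_k) *)
Definition W (x : Vn) : op :=
  mxI (fun j k : cfg => \prod_(i < n)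
         w1 (x.1 i) (x.2 i) (enum_rank (j i)) (enum_rank (k i))).

Definition psd (A : op) : Prop :=
  adj A = A /\ forall v : 'cV[C]_#|{ffun 'I_n -> 'Z_d}|, 0 <= (adj v *m A *m v) 0 0.
Definition is_state (rho : op) : Prop := psd rho /\ \tr rho = 1.

Definition charfun (rho : op) (x : Vn) : C := \tr (rho *m W (- x)).

(* mean state: the operator with characteristic function Xi_rho restricted to
   {|Xi_rho| = 1}, via the inversion formula rho = d^{-n} sum_x Xi(x) w(x) *)
Definition mean_state (rho : op) : op :=
  ((d ^ n)%:R)^-1 *: \sum_(x : Vn)
     (if `|charfun rho x| == 1 then charfun rho x else 0) *: W x.

(* C*-algebra generated by a family G of operators: the smallest set of
   operators containing G and closed under 0, +, scalar multiplication,
   products and adjoints (in finite dimension this is automatically closed). *)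
Definition in_Cstar (G : op -> Prop) (A : op) : Prop :=
  forall B : op -> Prop,
    (forall g, G g -> B g) ->
    B 0 ->
    (forall X Y, B X -> B Y -> B (X + Y)) ->
    (forall (c : C) X, B X -> B (c *: X)) ->
    (forall X Y, B X -> B Y -> B (X *m Y)) ->
    (forall X, B X -> B (adj X)) ->
    B A.

Definition is_projection (P : op) : Prop := P *m P = P /\ adj P = P.

Definition minimal_projection (A : op -> Prop) (P : op) : Prop :=
  A P /\ is_projection P /\ P != 0 /\
  forall Q, A Q -> is_projection Q -> P *m Q = Q -> Q = 0 \/ Q = P.

End Weyl.

From HB Require Import structures.
From mathcomp Require Import all_boot all_order all_algebra.
From mathcomp Require Import ring.
Import Order.TTheory GRing.Theory Num.Theory.
Local Open Scope ring_scope.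
Set Implicit Arguments. Unset Strict Implicit. Unset Printing Implicit Defensive.

(* Write lam(x) = Xi_rho(x) = Tr[rho w(-x)] and S = {x | |lam(x)| = 1}.
   1. Cauchy-Schwarz equality case: if rho is a state and U is unitary with
      |Tr[rho U]| = 1, then rho U = Tr[rho U] rho.  Applied to the unitaries
      w(x), every x in S gives an eigen-relation w(x) rho = lam(x)^* rho.
   2. Writing v(x) = lam(x) w(x), the eigen-relations force v(x) v(y) = v(x+y)
      for x, y in S (the cocycle of the Weyl operators is absorbed), so S is
      a subgroup of V^n whose Weyl operators commute.
   3. P = |S|^-1 sum_{x in S} v(x) is then a projection with v(x) P = P; every
      element of the C*-algebra generated by {w(x) | x in S} acts on P as a
      scalar, hence P is minimal.  Tr P = d^n/|S| (the Weyl operators w(x),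
      x <> 0, are traceless), so |S| divides d^n and is a power d^r of the
      prime d; rank P = Tr P = d^(n-r) and M(rho) = d^-n sum_S v = P/d^(n-r). *)

Section Adjoint.
Variable C : numClosedFieldType.

Lemma adjK m k (A : 'M[C]_(m, k)) : adj (adj A) = A.
Proof. by apply/matrixP=> i j; rewrite !mxE conjCK. Qed.

Lemma adjM m k l (A : 'M[C]_(m, k)) (B : 'M[C]_(k, l)) :
  adj (A *m B) = adj B *m adj A.
Proof.
apply/matrixP=> i j; rewrite !mxE rmorph_sum; apply: eq_bigr => t _.
by rewrite !mxE rmorphM mulrC.
Qed.

Lemma adjD m k (A B : 'M[C]_(m, k)) : adj (A + B) = adj A + adj B.
Proof. by apply/matrixP=> i j; rewrite !mxE rmorphD. Qed.

Lemma adjB m k (A B : 'M[C]_(m, k)) : adj (A - B) = adj A - adj B.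
Proof. by apply/matrixP=> i j; rewrite !mxE rmorphB. Qed.

Lemma adj_scale m k c (A : 'M[C]_(m, k)) : adj (c *: A) = c^* *: adj A.
Proof. by apply/matrixP=> i j; rewrite !mxE rmorphM. Qed.

Lemma adj0 m k : adj (0 : 'M[C]_(m, k)) = 0.
Proof. by apply/matrixP=> i j; rewrite !mxE rmorph0. Qed.

Lemma adj_sum m k (I : finType) (P : pred I) (F : I -> 'M[C]_(m, k)) :
  adj (\sum_(i | P i) F i) = \sum_(i | P i) adj (F i).
Proof. exact: (big_morph _ (@adjD m k) (@adj0 m k)). Qed.

Lemma adj_scalar m (a : C) : adj (a%:M : 'M[C]_m) = a^*%:M.
Proof.
apply/matrixP=> i j; rewrite !mxE eq_sym.
by case: (_ == _); rewrite /= ?mulr1n ?mulr0n ?rmorph0.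
Qed.

Lemma mxtrace_adj m (A : 'M[C]_m) : \tr (adj A) = (\tr A)^*.
Proof. by rewrite /mxtrace rmorph_sum; apply: eq_bigr => i _; rewrite !mxE. Qed.

End Adjoint.

Section Positivity.
Variable C : numClosedFieldType.

Definition qf m (R : 'M[C]_m) (v : 'cV[C]_m) : C := (adj v *m R *m v) 0 0.

(* A scalar inequality behind Cauchy-Schwarz: if the real quadratic
   t a^* + t^* a + |t|^2 K (K >= 0) is nonnegative for all t, then a = 0;
   evaluate at t = - a / (K + 1). *)
Lemma nonneg_quadratic_null (K a : C) : 0 <= K ->
  (forall t : C, 0 <= t * a^* + t^* * a + t^* * t * K) -> a = 0.
Proof.
move=> K0 H.
have K1 : K + 1 != 0 by rewrite gt_eqF // ltr_wpDl.
set u := (K + 1)^-1.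
have uc : u^* = u by rewrite geC0_conj // invr_ge0 addr_ge0.
have := H (- a * u).
have -> : (- a * u)^* = - a^* * u by rewrite rmorphM rmorphN /= uc.
set N := a * a^*.
have -> : - a * u * a^* + - a^* * u * a + - a^* * u * (- a * u) * K =
  - (N * (K + 2%:R)) / (K + 1) ^+ 2.
  by rewrite /N /u; field; exact: K1.
rewrite ler_pdivlMr ?exprn_gt0 ?ltr_wpDl // mul0r oppr_ge0 => N_le0.
have N0 : 0 <= N by rewrite /N -normCK exprn_ge0.
have N_ge0 : 0 <= N * (K + 2%:R) by rewrite mulr_ge0 // addr_ge0.
have /eqP : N * (K + 2%:R) = 0 by apply/le_anti; rewrite N_le0 N_ge0.
rewrite mulf_eq0 => /orP [|]; last by rewrite gt_eqF // ltr_wpDl.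
by rewrite /N -normCK sqrf_eq0 normr_eq0 => /eqP.
Qed.

Lemma psd_kernel m (R : 'M[C]_m) : adj R = R -> (forall v, 0 <= qf R v) ->
  forall v, qf R v = 0 -> R *m v = 0.
Proof.
move=> hR pR v qv.
have orth : forall w : 'cV[C]_m, (adj w *m R *m v) 0 0 = 0.
  move=> w; set a := (adj w *m R *m v) 0 0.
  apply: (@nonneg_quadratic_null (qf R w)) => // t.
  have ha : a^* = (adj v *m R *m w) 0 0.
    by rewrite /a -[in RHS]hR -[in RHS](adjK w) -!adjM mulmxA !mxE.
  have := pR (v + t *: w).
  have E1 (A B : 'M[C]_1) : (A + B) 0 0 = A 0 0 + B 0 0 by rewrite mxE.
  have E2 c (A : 'M[C]_1) : (c *: A) 0 0 = c * A 0 0 by rewrite mxE.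
  rewrite /qf adjD adj_scale !mulmxDl !mulmxDr -!scalemxAl -!scalemxAr !E1 !E2.
  by rewrite -/(qf R v) qv add0r ha -/(qf R w) -/a !addrA mulrA.
apply/matrixP => i j; rewrite (ord1 j) [RHS]mxE.
have hd : adj (delta_mx i 0 : 'cV[C]_m) = delta_mx 0 i.
  apply/matrixP => a b; rewrite !mxE.
  by case: (_ == _); case: (_ == _); rewrite /= ?rmorph1 ?rmorph0.
by have := orth (delta_mx i 0); rewrite hd -mulmxA -rowE mxE.
Qed.

Lemma qf_col m (R M : 'M[C]_m) j : (adj M *m R *m M) j j = qf R (col j M).
Proof.
rewrite /qf !mxE; apply: eq_bigr => k _; rewrite !mxE; congr (_ * _).
by apply: eq_bigr => l _; rewrite !mxE.
Qed.

Lemma mulmx_col m (R M : 'M[C]_m) i j : (R *m M) i j = (R *m col j M) i 0.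
Proof. by rewrite !mxE; apply: eq_bigr => k _; rewrite !mxE. Qed.

(* Equality case of Cauchy-Schwarz: for a state R and a unitary U with
   |Tr[R U]| = 1, U acts on the support of R as the scalar Tr[R U].  Indeed
   M = U - Tr[R U] satisfies Tr[M^* R M] = 0, so R kills every column of M. *)
Lemma state_unitary_eigen m (R U : 'M[C]_m) :
  adj R = R -> (forall v, 0 <= qf R v) -> \tr R = 1 ->
  U *m adj U = 1%:M -> `|\tr (R *m U)| = 1 -> R *m U = \tr (R *m U) *: R.
Proof.
move=> hR pR tR hU nl; set l := \tr (R *m U).
have t1 : \tr (adj U *m R *m U) = 1 by rewrite mxtrace_mulC mulmxA hU mul1mx.
have t2 : \tr (adj U *m R) = l^*.
  by rewrite mxtrace_mulC -{1}hR -adjM mxtrace_adj mxtrace_mulC.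
set M := U - l%:M.
have trM : \tr (adj M *m R *m M) = 0.
  rewrite /M adjB adj_scalar mulmxBl mul_scalar_mx mulmxBr mulmxBl.
  rewrite mul_mx_scalar -scalemxAl !linearB /= !mxtraceZ t1 t2 tR -/l.
  have l1 : l * l^* = 1 by rewrite -normCK nl expr1n.
  by rewrite mulr1 (mulrC l^*) l1 !subrr.
have qfM j : qf R (col j M) = 0.
  move: trM; rewrite /mxtrace; under eq_bigr => k _ do rewrite qf_col.
  by move/psumr_eq0P => H; apply: H => // k _; apply: pR.
have RM : R *m M = 0.
  by apply/matrixP => i j; rewrite mulmx_col (psd_kernel hR pR (qfM j)) !mxE.
by apply/eqP; rewrite -subr_eq0 -mul_mx_scalar -mulmxBr RM.
Qed.

Lemma idempotent_factor_inv r m (A : 'M[C]_(m, r)) (B L : 'M[C]_(r, m)) :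
  L *m A = 1%:M -> row_free B -> A *m B *m (A *m B) = A *m B -> B *m A = 1%:M.
Proof.
move=> hL fB e; apply: (row_free_inj fB); rewrite mul1mx.
by have := congr1 (mulmx L) e; rewrite !mulmxA hL !mul1mx.
Qed.

Lemma rank_idempotent m (P : 'M[C]_m) : P *m P = P -> (\rank P)%:R = \tr P.
Proof.
move=> hP; have AB := mulmx_base P.
have [L hL] : exists L, L *m col_base P = 1%:M.
  by apply/row_fullP; exact: col_base_full.
have BA : row_base P *m col_base P = 1%:M.
  by apply: (idempotent_factor_inv hL (row_base_free P)); rewrite AB hP.
by rewrite -{2}AB mxtrace_mulC BA mxtrace1.
Qed.

End Positivity.

Section IndexedMatrices.
Variable C : numClosedFieldType.

Lemma mxIE (I : finType) (f : I -> I -> C) a b :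
  mxI f (enum_rank a) (enum_rank b) = f a b.
Proof. by rewrite mxE !enum_rankK. Qed.

Lemma sum_enum_rank (I : finType) (F : 'I_#|I| -> C) :
  \sum_(c : 'I_#|I|) F c = \sum_(t : I) F (enum_rank t).
Proof.
rewrite (reindex (@enum_rank I)) //; exists (@enum_val _ _) => x _.
  exact: enum_rankK.
exact: enum_valK.
Qed.

Lemma mulmx_enum (I : finType) (A B : 'M[C]_#|I|) a b :
  (A *m B) a b = \sum_(t : I) A a (enum_rank t) * B (enum_rank t) b.
Proof. by rewrite mxE sum_enum_rank. Qed.

Lemma mx_eqI (I : finType) (A B : 'M[C]_#|I|) :
  (forall j k : I, A (enum_rank j) (enum_rank k) = B (enum_rank j) (enum_rank k)) ->
  A = B.
Proof. by move=> H; apply/matrixP=> a b; rewrite -(enum_valK a) -(enum_valK b) H. Qed.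

End IndexedMatrices.

Section Tensor.
Variables (C : numClosedFieldType) (d n : nat).

Definition tens (F : 'I_n -> 'M[C]_#|'Z_d|) : op C d n :=
  mxI (fun j k : cfg d n => \prod_(i < n) F i (enum_rank (j i)) (enum_rank (k i))).

Lemma tensE F (j k : cfg d n) : tens F (enum_rank j) (enum_rank k) =
   \prod_(i < n) F i (enum_rank (j i)) (enum_rank (k i)).
Proof. exact: mxIE. Qed.

Lemma tens_ext (F G : 'I_n -> 'M[C]_#|'Z_d|) : (forall i, F i = G i) -> tens F = tens G.
Proof. by move=> H; apply: mx_eqI => j k; rewrite !tensE; apply: eq_bigr => i _; rewrite H. Qed.

Lemma tens_mul F G : tens F *m tens G = tens (fun i => F i *m G i).
Proof.
apply: mx_eqI => j k; rewrite mulmx_enum tensE.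
under eq_bigr => t _ do rewrite !tensE -big_split /=.
under [RHS]eq_bigr => i _ do rewrite mulmx_enum.
by rewrite bigA_distr_bigA.
Qed.

Lemma tens1 : tens (fun _ => 1%:M) = 1%:M.
Proof.
apply: mx_eqI => j k; rewrite tensE mxE (inj_eq enum_rank_inj).
case: (eqVneq j k) => [->|njk].
  by rewrite big1 // => i _; rewrite mxE eqxx.
have [i Hi] : exists i, j i != k i.
  apply/existsP; apply: contraT; rewrite negb_exists => /forallP H.
  by case/eqP: njk; apply/ffunP => i; apply/eqP; move: (H i); rewrite negbK.
by rewrite (bigD1 i) //= mxE (inj_eq enum_rank_inj) (negbTE Hi) mul0r.
Qed.

Lemma tens_adj F : adj (tens F) = tens (fun i => adj (F i)).
Proof.
apply: mx_eqI => j k; rewrite /adj mxE mxE !tensE rmorph_prod.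
by apply: eq_bigr => i _; rewrite !mxE.
Qed.

Lemma tensZ (c : 'I_n -> C) F :
  tens (fun i => c i *: F i) = (\prod_(i < n) c i) *: tens F.
Proof.
apply: mx_eqI => j k; rewrite tensE [RHS]mxE tensE -big_split /=.
by apply: eq_bigr => i _; rewrite mxE.
Qed.

Lemma tens_tr F : \tr (tens F) = \prod_(i < n) \tr (F i).
Proof.
rewrite /mxtrace sum_enum_rank.
under eq_bigr => t _ do rewrite tensE.
under [RHS]eq_bigr => i _ do rewrite sum_enum_rank.
by rewrite bigA_distr_bigA.
Qed.

End Tensor.

Section RootsOfUnity.
Variables (C : numClosedFieldType) (d : nat).
Hypothesis pd : prime d.

Let d_gt1 : (1 < d)%N := prime_gt1 pd.
Let d_gt0 : (0 < d)%N := prime_gt0 pd.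
Let Zp_d : (Zp_trunc d).+2 = d := Zp_cast d_gt1.

Lemma omega_d : omega C d ^+ d = 1.
Proof. by rewrite /omega exprAC rootCK // sqrrN expr1n. Qed.

Lemma omega_neq1 : omega C d != 1.
Proof.
rewrite /omega sqrf_eq1 negb_or; apply/andP; split.
  apply/eqP => h; have := rootCK d_gt0 (-1 : C); rewrite h expr1n => /eqP.
  by rewrite -subr_eq0 opprK -[1 + 1]/(2%:R) pnatr_eq0.
by apply/eqP => h; have := rootC_lt0 (-1 : C) d_gt1; rewrite h ltrN10.
Qed.

Lemma omega_prim : d.-primitive_root (omega C d).
Proof.
have [k pk kd] := prim_order_exists d_gt0 omega_d.
move/primeP: pd => [_ H]; case/orP: (H k kd) => /eqP k1; last by move: pk; rewrite k1.
by move: pk; rewrite k1 => /prim_expr_order; rewrite expr1 => h; case/eqP: omega_neq1.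
Qed.

Lemma norm_omega : `|omega C d| = 1.
Proof. by apply/eqP; rewrite -(pexpr_eq1 d_gt0) // -normrX omega_d normr1. Qed.

Lemma ltZ (a : 'Z_d) : (val a < d)%N.
Proof. by case: a => k /=; rewrite Zp_d. Qed.

Lemma val_addZ (a b : 'Z_d) : val (a + b) = ((val a + val b) %% d)%N.
Proof.
transitivity ((val a + val b) %% (Zp_trunc d).+2)%N => //.
by move: (_ + _)%N => z; rewrite Zp_d.
Qed.

Lemma val_mulZ (a b : 'Z_d) : val (a * b) = ((val a * val b) %% d)%N.
Proof.
transitivity ((val a * val b) %% (Zp_trunc d).+2)%N => //.
by move: (_ * _)%N => z; rewrite Zp_d.
Qed.

Lemma chiD (a b : 'Z_d) : chi C (a + b) = chi C a * chi C b.
Proof. by rewrite /chi val_addZ expr_mod ?omega_d // exprD. Qed.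

Lemma chi0 : @chi C d 0 = 1.
Proof. by rewrite /chi expr0. Qed.

Lemma chiX (a p : 'Z_d) : chi C a ^+ val p = chi C (a * p).
Proof. by rewrite /chi val_mulZ expr_mod ?omega_d // exprM. Qed.

Lemma norm_chi (a : 'Z_d) : `|chi C a| = 1.
Proof. by rewrite /chi normrX norm_omega expr1n. Qed.

Lemma conj_norm1 (x : C) : `|x| = 1 -> x * x^* = 1.
Proof. by move=> h; rewrite -normCK h expr1n. Qed.

Lemma chi_conj (a : 'Z_d) : (chi C a)^* = chi C (- a).
Proof.
have nz : chi C a != 0 by rewrite -normr_eq0 norm_chi oner_eq0.
apply: (mulfI nz); rewrite (conj_norm1 (norm_chi a)).
by rewrite -chiD subrr chi0.
Qed.

Lemma sum_chi (p : 'Z_d) : p != 0 -> \sum_(a : 'Z_d) chi C (a * p) = 0.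
Proof.
move=> p0; pose z := omega C d ^+ val p.
have ez (a : 'Z_d) : chi C (a * p) = z ^+ val a.
  rewrite -chiX /chi /z -!exprM; congr (_ ^+ _); by rewrite (mulnC (val a)).
under eq_bigr => a _ do rewrite ez.
have -> : \sum_(a : 'Z_d) z ^+ val a = \sum_(i < (Zp_trunc d).+2) z ^+ i by [].
rewrite Zp_d.
have z1 : z != 1.
  rewrite /z -(prim_order_dvd omega_prim); apply/negP => /dvdnP [k hk].
  have lt := ltZ p; rewrite hk in lt.
  have k0 : k = 0%N by case: k {hk} lt => // k; rewrite mulSn ltnNge leq_addr.
  by move: p0; rewrite -val_eqE /= hk k0 mul0n.
have zd : z ^+ d = 1 by rewrite /z exprAC omega_d expr1n.
have := subrX1 z d; rewrite zd subrr => /esym/eqP.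
by rewrite mulf_eq0 subr_eq0 (negbTE z1) => /eqP.
Qed.

End RootsOfUnity.

Section SingleQuditWeyl.
Variables (C : numClosedFieldType) (d : nat).
Hypothesis pd : prime d.
Local Notation rk := (@enum_rank _).

Lemma Zpow_E k (a b : 'Z_d) : mxpow (Zop C d) k (rk a) (rk b) =
   ((a == b) : nat)%:R * chi C a ^+ k.
Proof.
elim: k => [|k IH]; first by rewrite /= mxE (inj_eq enum_rank_inj) mulr1.
rewrite [mxpow _ _]/= mulmx_enum (bigD1 a) //= big1 ?addr0.
  by rewrite mxIE IH eqxx !mul1r exprS mulrCA.
by move=> t /negbTE nt; rewrite mxIE (eq_sym a t) nt !mul0r.
Qed.

Lemma Xpow_E k (a b : 'Z_d) : mxpow (Xop C d) k (rk a) (rk b) =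
   ((a == b + k%:R) : nat)%:R.
Proof.
elim: k a => [|k IH] a; first by rewrite /= mxE (inj_eq enum_rank_inj) addr0.
rewrite [mxpow _ _]/= mulmx_enum (bigD1 (b + k%:R)) //= big1 ?addr0.
  by rewrite mxIE IH eqxx mulr1 -natr1 addrA.
by move=> t /negbTE nt; rewrite IH nt mulr0.
Qed.

Lemma w1E (p q a b : 'Z_d) : w1 C p q (rk a) (rk b) =
  wphase C p q * chi C (a * p) * ((a == b + q) : nat)%:R.
Proof.
rewrite /w1 mxE mulmx_enum (bigD1 a) //= big1 ?addr0.
  by rewrite Zpow_E Xpow_E natr_Zp eqxx mul1r (@chiX C d pd) mulrA.
by move=> t /negbTE nt; rewrite Zpow_E (eq_sym a t) nt !mul0r.
Qed.

Lemma wphase00 : wphase C (0 : 'Z_d) 0 = 1.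
Proof.
rewrite /wphase !mulr0 oppr0; case: ifP => _; first by rewrite expr0 invr1.
exact: chi0.
Qed.

Lemma wphase_norm (p q : 'Z_d) : `|wphase C p q| = 1.
Proof.
rewrite /wphase; case: ifP => _; last exact: norm_chi.
by rewrite normrV ?unitrX ?unitfE ?neq0Ci // normrX normCi expr1n invr1.
Qed.

Lemma wphase_neq0 (p q : 'Z_d) : wphase C p q != 0.
Proof. by rewrite -normr_eq0 wphase_norm oner_eq0. Qed.

(* the phase convention makes w(p,q)^* = w(-p,-q); for d = 2 we use
   -x = x in Z_2 and omega = -1, for odd d the inverse of 2 *)
Lemma wphase_adj (p q : 'Z_d) :
  (wphase C p q)^* * chi C (- (p * q)) = wphase C (- p) (- q).
Proof.
rewrite /wphase !mulrN !mulNr !opprK; case: eqP => [d2|nd2].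
  subst d; have Z2opp (x : 'Z_2) : - x = x.
    by case: x => [[|[|//]]] i; apply/val_inj.
  rewrite Z2opp /chi /omega rootCK //.
  have : (val (p * q)%R < 2)%N by apply: ltn_ord.
  move: (val (p * q)) => [|[|//]] _; first by rewrite !expr0 invr1 rmorph1 mul1r.
  by rewrite !expr1 rmorphV ?unitfE ?neq0Ci //= conjCi invrN mulrN mulr1 opprK.
have u2 : (2%:R : 'Z_d) \is a GRing.unit.
  rewrite unitZpE ?prime_gt1 // prime_coprime //.
  apply/negP => /(@dvdn_leq _ 2 isT) le2.
  by case: nd2; apply/eqP; rewrite eqn_leq le2 prime_gt1.
rewrite (@chi_conj C d pd) opprK -(@chiD C d pd); congr chi.
set h := (2%:R : 'Z_d)^-1.
have -> : p * q = (h * 2%:R) * (p * q) by rewrite mulVr // mul1r.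
rewrite -!mulrA (_ : 2%:R = 1 + 1 :> 'Z_d) // mulrDl mul1r mulrDr.
by rewrite opprD addrA subrr sub0r.
Qed.

Lemma w1_00 : w1 C (0 : 'Z_d) 0 = 1%:M.
Proof.
apply: mx_eqI => a b; rewrite w1E wphase00 mulr0 chi0 addr0 !mul1r.
by rewrite mxE (inj_eq enum_rank_inj).
Qed.

Lemma w1_mul (p q p' q' : 'Z_d) : w1 C p q *m w1 C p' q' =
  (wphase C p q * wphase C p' q' * chi C (- (p' * q)) / wphase C (p + p') (q + q'))
    *: w1 C (p + p') (q + q').
Proof.
apply: mx_eqI => a b; rewrite mulmx_enum (bigD1 (b + q')) //= big1 ?addr0; last first.
  by move=> t /negbTE nt; rewrite !w1E nt !mulr0.
rewrite [RHS]mxE !w1E eqxx mulr1 (addrC q q') addrA.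
case: (eqVneq a (b + q' + q)) => [->|na] /=; last by rewrite !mulr0 !mul0r.
rewrite !mulr1 -!mulrA; congr (_ * _); rewrite mulKf ?wphase_neq0 // mulrCA.
by congr (_ * _); rewrite -!(@chiD C d pd); congr chi; ring.
Qed.

Lemma w1_adj (p q : 'Z_d) : adj (w1 C p q) = w1 C (- p) (- q).
Proof.
apply: mx_eqI => a b; rewrite /adj mxE mxE !w1E.
case: (eqVneq b (a + q)) => [->|nb].
  rewrite /= addrK eqxx !mulr1 rmorphM /= (@chi_conj C d pd) -wphase_adj.
  by rewrite -mulrA; congr (_ * _); rewrite -(@chiD C d pd); congr chi; ring.
rewrite /= mulr0 rmorph0.
suff /negbTE -> : a != b + - q by rewrite mulr0.
by apply: contra nb => /eqP ->; rewrite subrK.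
Qed.

Lemma w1_unit (p q : 'Z_d) : w1 C p q *m adj (w1 C p q) = 1%:M.
Proof.
rewrite w1_adj w1_mul !subrr w1_00 wphase00 divr1.
rewrite -wphase_adj mulrA (conj_norm1 (wphase_norm p q)) mul1r.
by rewrite mulNr opprK -(@chiD C d pd) addrC subrr chi0 scale1r.
Qed.

Lemma w1_tr (p q : 'Z_d) : (p != 0) || (q != 0) -> \tr (w1 C p q) = 0.
Proof.
move=> H; rewrite /mxtrace sum_enum_rank.
case: (eqVneq q 0) => [q0|nq].
  subst q; rewrite orbF in H.
  under eq_bigr => a _ do rewrite w1E addr0 eqxx mulr1.
  by rewrite -mulr_sumr (@sum_chi C d pd) ?mulr0.
apply: big1 => a _; rewrite w1E.
suff /negbTE -> : a != a + q by rewrite mulr0.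
by apply: contra nq => /eqP h; rewrite -(addrI a (esym (etrans (addr0 a) h))).
Qed.

End SingleQuditWeyl.

Section Weyl.
Variables (C : numClosedFieldType) (d n : nat).
Hypothesis pd : prime d.

Lemma W_tens (x : Vn d n) : W C x = tens (fun i => w1 C (x.1 i) (x.2 i)).
Proof. by []. Qed.

Lemma W0 : W C (0 : Vn d n) = 1%:M.
Proof.
rewrite W_tens -tens1; apply: tens_ext => i /=; rewrite !ffunE.
exact: (w1_00 C pd).
Qed.

Lemma W_adj (x : Vn d n) : adj (W C x) = W C (- x).
Proof.
rewrite !W_tens tens_adj; apply: tens_ext => i /=; rewrite !ffunE.
exact: (w1_adj C pd).
Qed.

Lemma W_unit (x : Vn d n) : W C x *m adj (W C x) = 1%:M.
Proof.
rewrite W_tens tens_adj tens_mul -tens1; apply: tens_ext => i.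
exact: (w1_unit C pd).
Qed.

Lemma card_cfg : #|cfg d n| = (d ^ n)%N.
Proof. by rewrite card_ffun card_ord card_ord Zp_cast // prime_gt1. Qed.

Lemma dim_neq0 : ((d ^ n)%:R : C) != 0.
Proof. by rewrite pnatr_eq0 expn_eq0 negb_and (gtn_eqF (prime_gt0 pd)). Qed.

Lemma W_tr (x : Vn d n) : \tr (W C x) = if x == 0 then (d ^ n)%:R else 0.
Proof.
case: eqP => [->|nx]; first by rewrite W0 mxtrace1 card_cfg.
rewrite W_tens tens_tr.
have [i Hi] : exists i, (x.1 i != 0) || (x.2 i != 0).
  apply/existsP; apply: contraT; rewrite negb_exists => /forallP H.
  case: nx; case: x H => x1 x2 H /=; congr (_, _); apply/ffunP => i;
    move: (H i); rewrite negb_or !negbK => /andP[/eqP h1 /eqP h2]; rewrite ffunE //.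
by rewrite (bigD1 i) //= (w1_tr C pd) ?mul0r.
Qed.

Lemma W_mul (x y : Vn d n) :
  exists c : C, c * c^* = 1 /\ W C x *m W C y = c *: W C (x + y).
Proof.
have [c hc] : exists c : C, W C x *m W C y = c *: W C (x + y).
  rewrite !W_tens tens_mul.
  exists (\prod_(i < n) (wphase C (x.1 i) (x.2 i) * wphase C (y.1 i) (y.2 i) *
    chi C (- (y.1 i * x.2 i)) / wphase C (x.1 i + y.1 i) (x.2 i + y.2 i))).
  by rewrite -tensZ; apply: tens_ext => i; rewrite (w1_mul C pd) /= !ffunE.
exists c; split => //.
have e : (W C x *m W C y) *m adj (W C x *m W C y) = 1%:M.
  by rewrite adjM mulmxA -(mulmxA (W C x)) W_unit mulmx1 W_unit.
move: e; rewrite hc adj_scale -scalemxAl -scalemxAr W_unit scalerA => e.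
have := congr1 mxtrace e; rewrite mxtraceZ mxtrace1 => /eqP.
rewrite -subr_eq0 -{2}[_%:R]mul1r -mulrBl mulf_eq0 card_cfg (negbTE dim_neq0) orbF.
by rewrite subr_eq0 => /eqP.
Qed.

End Weyl.

Section StabilizerOfState.
Variables (C : numClosedFieldType) (d n : nat).
Hypothesis pd : prime d.
Variable rho : op C d n.
Hypothesis rho_state : is_state rho.

Let rho_herm : adj rho = rho. Proof. by case: rho_state => [[]]. Qed.
Let rho_psd : forall v, 0 <= qf rho v. Proof. by case: rho_state => [[]]. Qed.
Let rho_tr : \tr rho = 1. Proof. by case: rho_state. Qed.

Local Notation lam := (charfun rho).

Definition stab : {set Vn d n} := [set x | `|lam x| == 1].

Lemma in_stab x : (x \in stab) = (`|lam x| == 1).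
Proof. by rewrite inE. Qed.

Lemma lam_unit x : x \in stab -> lam x * (lam x)^* = 1.
Proof. by rewrite in_stab => /eqP /conj_norm1. Qed.

Lemma lam_neq0 x : x \in stab -> lam x != 0.
Proof.
by move/lam_unit => h; apply/eqP => h0; move: h; rewrite h0 mul0r => /eqP; rewrite eq_sym oner_eq0.
Qed.

Lemma lamN x : lam (- x) = (lam x)^*.
Proof. by rewrite /charfun opprK -mxtrace_adj adjM rho_herm (W_adj C pd) opprK mxtrace_mulC. Qed.

Lemma rho_neq0 : rho != 0.
Proof. by apply/eqP => h; move: rho_tr; rewrite h linear0 => /eqP; rewrite eq_sym oner_eq0. Qed.

Lemma rho_WN x : x \in stab -> rho *m W C (- x) = lam x *: rho.
Proof.
move=> hx; apply: (state_unitary_eigen rho_herm rho_psd rho_tr (W_unit C pd _)).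
by move: hx; rewrite in_stab => /eqP.
Qed.

Lemma W_rho x : x \in stab -> W C x *m rho = (lam x)^* *: rho.
Proof.
move=> hx; have := congr1 (@adj C _ _) (rho_WN hx).
by rewrite adjM rho_herm (W_adj C pd) opprK adj_scale rho_herm.
Qed.

Lemma rho_W x : x \in stab -> rho *m W C x = (lam x)^* *: rho.
Proof.
move=> hx; have WN := W_unit C pd (- x); rewrite (W_adj C pd) opprK in WN.
have e : rho = lam x *: (rho *m W C x).
  by rewrite -{1}(mulmx1 rho) -WN mulmxA (rho_WN hx) -scalemxAl.
by apply: (scalerI (lam_neq0 hx)); rewrite -e scalerA (lam_unit hx) scale1r.
Qed.

Lemma stab0 : (0 : Vn d n) \in stab.
Proof. by rewrite in_stab /charfun oppr0 (W0 C n pd) mulmx1 rho_tr normr1. Qed.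

(* Tr[rho w(y) w(-x)] = lam(y)^* lam(x) is unimodular, so lam(x - y) is too *)
Lemma stabB x y : x \in stab -> y \in stab -> x - y \in stab.
Proof.
move=> hx hy; have [c [hc e]] := W_mul C pd y (- x).
have t : \tr (rho *m (W C y *m W C (- x))) = (lam y)^* * lam x.
  by rewrite mulmxA (rho_W hy) -scalemxAl (rho_WN hx) scalerA mxtraceZ rho_tr mulr1.
have yx : y + - x = - (x - y) by rewrite opprB addrC.
rewrite e -scalemxAr mxtraceZ yx in t.
have {}t : c * lam (x - y) = (lam y)^* * lam x by exact: t.
have : (c * lam (x - y)) * (c * lam (x - y))^* = 1.
  rewrite t rmorphM /= conjCK mulrACA (mulrC _ (lam y)).
  by rewrite (lam_unit hy) (lam_unit hx) mulr1.
rewrite rmorphM mulrACA hc mul1r -normCK => /eqP.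
by rewrite sqrp_eq1 ?normr_ge0 // => h; rewrite in_stab.
Qed.

Lemma stabN x : x \in stab -> - x \in stab.
Proof. by move=> hx; rewrite -sub0r; apply: stabB => //; exact: stab0. Qed.

Lemma stabD x y : x \in stab -> y \in stab -> x + y \in stab.
Proof. by move=> hx hy; rewrite -(opprK y); apply: stabB => //; exact: stabN. Qed.

(* the Weyl operators rescaled so that they fix rho *)
Definition vW x : op C d n := lam x *: W C x.

Lemma vW_rho x : x \in stab -> vW x *m rho = rho.
Proof. by move=> hx; rewrite /vW -scalemxAl (W_rho hx) scalerA (lam_unit hx) scale1r. Qed.

Lemma vW_mul x y : x \in stab -> y \in stab -> vW x *m vW y = vW (x + y).
Proof.
move=> hx hy; have [c [_ e]] := W_mul C pd x y; have hxy := stabD hx hy.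
have h : vW x *m vW y = (lam x * lam y * c) *: W C (x + y).
  by rewrite /vW -scalemxAl -scalemxAr e !scalerA.
suff k : lam x * lam y * c = lam (x + y) by rewrite h k.
have : (vW x *m vW y) *m rho = rho by rewrite -mulmxA !vW_rho.
rewrite h -scalemxAl (W_rho hxy) scalerA => e2.
have /eqP : (lam x * lam y * c * (lam (x + y))^* - 1) *: rho = 0.
  by rewrite scalerBl e2 scale1r subrr.
rewrite scaler_eq0 (negbTE rho_neq0) orbF subr_eq0 => /eqP h1.
by rewrite -[LHS]mulr1 -(lam_unit hxy) mulrCA h1 mulr1.
Qed.

Lemma stab_comm x y : x \in stab -> y \in stab -> W C x *m W C y = W C y *m W C x.
Proof.
move=> hx hy; have := vW_mul hx hy; rewrite addrC -(vW_mul hy hx) /vW.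
rewrite -!scalemxAl -!scalemxAr !scalerA (mulrC (lam y)).
by apply: scalerI; rewrite mulf_neq0 // lam_neq0.
Qed.

Lemma adj_vW x : adj (vW x) = vW (- x).
Proof. by rewrite /vW adj_scale (W_adj C pd) lamN. Qed.

Lemma sum_vW_shift y : y \in stab -> \sum_(x in stab) vW (y + x) = \sum_(x in stab) vW x.
Proof.
move=> hy; rewrite [RHS](reindex_inj (addrI y)) /=; apply: eq_bigl => x.
apply/idP/idP => h; first exact: stabD.
by rewrite -(addKr y x); apply: stabD => //; exact: stabN.
Qed.

Lemma sum_vW_neg : \sum_(x in stab) vW (- x) = \sum_(x in stab) vW x.
Proof.
rewrite [RHS](reindex_inj (inv_inj (@opprK (Vn d n)))) /=; apply: eq_bigl => x.
by apply/idP/idP => h; [exact: stabN | rewrite -(opprK x); exact: stabN].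
Qed.

Definition stabP : op C d n := (#|stab|%:R)^-1 *: \sum_(x in stab) vW x.

Lemma card_stab_neq0 : (#|stab|%:R : C) != 0.
Proof. by rewrite pnatr_eq0 -lt0n; apply/card_gt0P; exists 0; exact: stab0. Qed.

Lemma vW_stabP y : y \in stab -> vW y *m stabP = stabP.
Proof.
move=> hy; rewrite /stabP -scalemxAr mulmx_sumr.
by under eq_bigr => x hx do rewrite (vW_mul hy hx); rewrite sum_vW_shift.
Qed.

Lemma stabP_vW y : y \in stab -> stabP *m vW y = stabP.
Proof.
move=> hy; rewrite /stabP -scalemxAl mulmx_suml.
by under eq_bigr => x hx do rewrite (vW_mul hx hy) addrC; rewrite sum_vW_shift.
Qed.

Lemma stabP_idem : stabP *m stabP = stabP.
Proof.
rewrite {2}/stabP -scalemxAr mulmx_sumr.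
under eq_bigr => x hx do rewrite (stabP_vW hx).
by rewrite sumr_const -scaler_nat scalerA mulVf ?card_stab_neq0 // scale1r.
Qed.

Lemma stabP_adj : adj stabP = stabP.
Proof.
rewrite /stabP adj_scale adj_sum; under eq_bigr => x hx do rewrite adj_vW.
by rewrite sum_vW_neg geC0_conj // invr_ge0 ler0n.
Qed.

(* only the term x = 0 contributes to the trace *)
Lemma stabP_tr : \tr stabP = (#|stab|%:R)^-1 * (d ^ n)%:R.
Proof.
rewrite /stabP mxtraceZ linear_sum /=.
under eq_bigr => x _ do rewrite /vW mxtraceZ (W_tr C pd).
rewrite (bigD1 (0 : Vn d n)) ?stab0 //= big1 ?addr0 => [|x /andP[_ /negbTE ->]]; last first.
  by rewrite mulr0.
by rewrite eqxx /charfun oppr0 (W0 C n pd) mulmx1 rho_tr mul1r.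
Qed.

Lemma stabP_neq0 : stabP != 0.
Proof.
apply/eqP => h; have := stabP_tr; rewrite h linear0 => /esym/eqP.
by rewrite mulf_eq0 invr_eq0 (negbTE card_stab_neq0) (negbTE (dim_neq0 C n pd)).
Qed.

Lemma rank_stabP_card : (\rank stabP * #|stab|)%N = (d ^ n)%N.
Proof.
have e := rank_idempotent stabP_idem; rewrite stabP_tr in e.
apply/eqP; rewrite -(@eqr_nat C) natrM e mulrC mulrA.
by rewrite mulfV ?card_stab_neq0 // mul1r.
Qed.

Lemma card_stab_pow : exists2 r, (r <= n)%N & #|stab| = (d ^ r)%N.
Proof.
by apply/(dvdn_pfactor _ _ pd); apply/dvdnP; exists (\rank stabP); rewrite rank_stabP_card.
Qed.

Lemma rank_stabP r : (r <= n)%N -> #|stab| = (d ^ r)%N -> \rank stabP = (d ^ (n - r))%N.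
Proof.
move=> rn hr; apply/eqP; rewrite -(@eqn_pmul2r (d ^ r)) ?expn_gt0 ?prime_gt0 //.
by rewrite -expnD subnK // -hr rank_stabP_card.
Qed.

Lemma mean_state_stabP r : (r <= n)%N -> #|stab| = (d ^ r)%N ->
  mean_state rho = ((d ^ (n - r))%:R)^-1 *: stabP.
Proof.
move=> rn hr.
have -> : mean_state rho = ((d ^ n)%:R)^-1 *: \sum_(x in stab) vW x.
  rewrite /mean_state; congr (_ *: _); rewrite [RHS]big_mkcond.
  by apply: eq_bigr => x _; rewrite in_stab; case: ifP => _; rewrite ?scale0r.
have dr : (d ^ n)%N = (d ^ (n - r) * d ^ r)%N by rewrite -expnD subnK.
by rewrite /stabP scalerA hr dr natrM invfM.
Qed.

Definition stab_generators (A : op C d n) : Prop := exists2 x, x \in stab & A = W C x.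

Lemma stabP_Cstar : in_Cstar stab_generators stabP.
Proof.
move=> B hG h0 hD hZ _ _; apply: (hZ); apply: big_ind => // x hx.
by apply: (hZ); apply: hG; exists x.
Qed.

Lemma W_stabP x : x \in stab -> W C x *m stabP = (lam x)^-1 *: stabP.
Proof.
move=> hx; apply: (scalerI (lam_neq0 hx)).
by rewrite scalerA mulfV ?lam_neq0 // scale1r scalemxAl -[RHS](vW_stabP hx).
Qed.

Lemma stabP_W x : x \in stab -> stabP *m W C x = (lam x)^-1 *: stabP.
Proof.
move=> hx; apply: (scalerI (lam_neq0 hx)).
by rewrite scalerA mulfV ?lam_neq0 // scale1r scalemxAr -[RHS](stabP_vW hx).
Qed.

Lemma Cstar_scalar_on_stabP A : in_Cstar stab_generators A ->
  exists a : C, stabP *m A = a *: stabP /\ A *m stabP = a *: stabP.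
Proof.
move=> hA; apply: (hA (fun A => exists a, stabP *m A = a *: stabP /\ A *m stabP = a *: stabP)).
- by move=> g [x hx ->]; exists (lam x)^-1; rewrite stabP_W ?W_stabP.
- by exists 0; rewrite mulmx0 mul0mx scale0r.
- move=> X Y [a [hX1 hX2]] [b [hY1 hY2]]; exists (a + b).
  by rewrite mulmxDr mulmxDl hX1 hX2 hY1 hY2 scalerDl.
- move=> c X [a [hX1 hX2]]; exists (c * a).
  by rewrite -scalemxAr -scalemxAl hX1 hX2 scalerA.
- move=> X Y [a [hX1 hX2]] [b [hY1 hY2]]; exists (a * b); split.
    by rewrite mulmxA hX1 -scalemxAl hY1 scalerA.
  by rewrite -mulmxA hY2 -scalemxAr hX2 scalerA mulrC.
- move=> X [a [hX1 hX2]]; exists a^*; split.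
    by rewrite -{1}stabP_adj -adjM hX2 adj_scale stabP_adj.
  by rewrite -{1}stabP_adj -adjM hX1 adj_scale stabP_adj.
Qed.

(* P is a minimal projection: a subprojection Q = P Q of the algebra is a
   scalar multiple a P with a^2 = a *)
Lemma stabP_minimal : minimal_projection (in_Cstar stab_generators) stabP.
Proof.
split; first exact: stabP_Cstar.
split; first by split; [exact: stabP_idem | exact: stabP_adj].
split=> [|Q hQ [QQ _] PQ]; first exact: stabP_neq0.
have [a [h1 _]] := Cstar_scalar_on_stabP hQ.
have eQ : Q = a *: stabP by rewrite -PQ h1.
move: QQ; rewrite eQ -scalemxAl -scalemxAr stabP_idem scalerA => e.
have /eqP : (a * a - a) *: stabP = 0 by rewrite scalerBl e subrr.
rewrite scaler_eq0 (negbTE stabP_neq0) orbF -{3}(mulr1 a) -mulrBr mulf_eq0 subr_eq0.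
by case/orP => /eqP ->; [left; rewrite scale0r | right; rewrite scale1r].
Qed.

End StabilizerOfState.

Unset Implicit Arguments.

Theorem mainTheorem1 (C : numClosedFieldType) (d n : nat) :
  prime d -> (0 < n)%N ->
  forall rho : op C d n, is_state rho ->
  let S := [set x : Vn d n | `|charfun rho x| == 1] in
  [/\ 0 \in S,
      (forall x y, x \in S -> y \in S -> x - y \in S),
      (forall x y, x \in S -> y \in S -> W C x *m W C y = W C y *m W C x) &
      exists r : nat, exists P : op C d n,
        [/\ (r <= n)%N, #|S| = (d ^ r)%N,
            minimal_projection (in_Cstar (fun A => exists2 x, x \in S & A = W C x)) P,
            \rank P = (d ^ (n - r))%N &
            mean_state rho = ((d ^ (n - r))%:R)^-1 *: P]].
Proof.
move=> pd _ rho hrho S.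
split; [exact: (stab0 pd hrho) | exact: (stabB pd hrho) | exact: (stab_comm pd hrho) |].
have [r rn hr] := card_stab_pow pd hrho.
exists r, (stabP rho); split => //.
- exact: (stabP_minimal pd hrho).
- exact: (rank_stabP pd hrho rn hr).
- exact: (mean_state_stabP rn hr).
Qed.
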